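(* Let $A$ be a non-empty set, $\xi:B_{\ell_\infty(A)}\to\mathbb R$ a weak$^*$-continuous function (weak$^*$ topology from $\ell_\infty(A)=\ell_1(A)^*$), and $\phi\in\ell_\infty(A)^*$ with decomposition $\phi=\phi_0+\phi_1$, where $\phi_0\in\ell_1(A)$ (acting by $\phi_0(x^* )=\sum_a\phi_0(a)x^*(a)$) and $\phi_1\in\ell_\infty(A)^*$ vanishes on all finitely supported elements of $\ell_\infty(A)$. If $\xi(x^* )\le g_\phi(x^* )$ for all $x^*\in B_{\ell_\infty(A)}$, then $\xi(x^* )\le g_{\phi_0}(x^* )$ for all $x^*\in B_{\ell_\infty(A)}$.
   Context: For a linear functional $\psi$ on $\ell_\infty(A)$, $g_\psi:\ell_\infty(A)\to\mathbb R_+$ is defined by $g_\psi(x^* )=|\psi(|x^*|)|$. Every $\phi\in\ell_\infty(A)^*$ decomposes uniquely as $\phi=\phi_0+\phi_1$ as described. *)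

From HB Require Import structures.
From mathcomp Require Import all_boot all_order all_algebra.
From mathcomp Require Import boolp classical_sets cardinality reals ereal esum.
Set Implicit Arguments. Unset Strict Implicit. Unset Printing Implicit Defensive.
Import Order.TTheory GRing.Theory Num.Theory.
Local Open Scope ring_scope.
Local Open Scope classical_set_scope.

Section Linfty.
Variables (R : realType) (A : choiceType).

Definition linf (x : A -> R) : Prop := exists M : R, forall a, `|x a| <= M.

Definition inball (x : A -> R) : Prop := forall a, `|x a| <= 1.

Definition l1 (f : A -> R) : Prop := summable [set: A] (fun a => (f a)%:E).

Definition lsum (f : A -> R) : R :=
  fine (\esum_(a in [set: A]) (Num.max (f a) 0)%:E)
  - fine (\esum_(a in [set: A]) (Num.max (- f a) 0)%:E).

Definition l1act (f x : A -> R) : R := lsum (fun a => f a * x a).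

Definition linf_dual (psi : (A -> R) -> R) : Prop :=
  (forall (x y : A -> R) (s t : R), linf x -> linf y ->
     psi (fun a => s * x a + t * y a) = s * psi x + t * psi y) /\
  (exists C : R, forall (x : A -> R) (M : R),
     (forall a, `|x a| <= M) -> `|psi x| <= C * M).

Definition finsupp (x : A -> R) : Prop := finite_set [set a | x a != 0].

Definition gfun (psi : (A -> R) -> R) (x : A -> R) : R :=
  `|psi (fun a => `|x a|)|.

(* xi is continuous on B_{l_infty(A)} for the (relative) weak* topology
   sigma(l_infty(A), l_1(A)), via the standard neighbourhood basis
   { y | |<f_i, y - x>| < d, i < n }, f_i in l_1(A). *)
Definition wstar_cont_ball (xi : (A -> R) -> R) : Prop :=
  forall x, inball x -> forall e : R, 0 < e ->
    exists (n : nat) (F : 'I_n -> A -> R) (d : R),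
      [/\ 0 < d, (forall i, l1 (F i)) &
        forall y, inball y ->
          (forall i, `|l1act (F i) y - l1act (F i) x| < d) ->
          `|xi y - xi x| < e].

End Linfty.

From HB Require Import structures.
From mathcomp Require Import all_boot all_order all_algebra.
From mathcomp Require Import boolp classical_sets functions cardinality reals ereal esum.
From mathcomp Require Import lra.
Import Order.TTheory GRing.Theory Num.Theory.
Local Open Scope ring_scope.
Local Open Scope classical_set_scope.

(* Fix x in the ball and e > 0.  Weak* continuity of xi at x involves only
   finitely many functionals F_i in l_1(A), so there is a finite S outside which
   every F_i and phi0 have small l_1 tail.  The truncation x_S of x to S is then
   weak*-close to x, and phi0(|x_S|) is close to phi0(|x|).  Since |x_S| is
   finitely supported, phi1 kills it, so
   xi(x_S) <= g_phi(x_S) = g_phi0(x_S), and letting e -> 0 gives the claim. *)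

Section esum_tail.
Variables (R : realType) (T : choiceType).

Lemma le_esum_subset (S U : set T) (a : T -> \bar R) :
  (forall t, U t -> (0 <= a t)%E) -> S `<=` U ->
  (\esum_(t in S) a t <= \esum_(t in U) a t)%E.
Proof.
move=> a0 SU; rewrite (esumID S U a a0) (setIidr SU) leeDl //.
by apply: esum_ge0 => t [/a0].
Qed.

Lemma summable_tail_lt (f : T -> \bar R) (e : R) : summable [set: T] f -> 0 < e ->
  exists S, finite_set S /\
    forall U, S `<=` U -> (\esum_(t in ~` U) `|f t| < e%:E)%E.
Proof.
rewrite summableE => ffin e0.
set tot := (\esum_(t in [set: T]) `|f t|)%E in ffin.
have : (tot - e%:E < tot)%E by rewrite -(fineK ffin) -EFinB lte_fin; lra.
(* [\esum] is the supremum of the finite partial sums. *)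
move=> /ereal_sup_gt[_ [S [finS _] <-] totS]; exists S; split => // U SU.
apply: le_lt_trans (le_esum_subset _ _ _ (fun t _ => abse_ge0 (f t)) (subsetC SU)) _.
have split_tot := esumID S [set: T] (fun t => `|f t|)%E (fun _ _ => abse_ge0 _).
rewrite !setTI (@esum_fset _ _ S) // in split_tot.
have /andP[sum_fin _] : ((\sum_(t \in S) `|f t|)%E \is a fin_num) &&
    ((\esum_(t in ~` S) `|f t|)%E \is a fin_num) by rewrite -fin_numD -split_tot.
by move: totS; rewrite /tot split_tot lteBlDr // lteD2lE.
Qed.

End esum_tail.
Arguments summable_tail_lt {R T f e}.

Section truncation.
Variables (R : realType) (A : choiceType).
Implicit Types (f g u x : A -> R) (S : set A).

Local Notation trunc S := (patch (fun=> 0) S).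

Lemma esum_trunc S u :
  (\esum_(a in [set: A]) (trunc S u a)%:E = \esum_(a in S) (u a)%:E)%E.
Proof. by rewrite [RHS]esum_mkcond; apply: eq_esum => a _; rewrite /patch; case: ifP. Qed.

Lemma dominated_esum_fin_num f u S : l1 f -> (forall a, 0 <= u a <= `|f a|) ->
  (\esum_(a in S) (u a)%:E)%E \is a fin_num.
Proof.
rewrite /l1 summableE => ffin u_dom.
rewrite ge0_fin_numE; last by apply: esum_ge0 => a _; case/andP: (u_dom a).
apply: (@le_lt_trans _ _ (\esum_(a in [set: A]) `|(f a)%:E|)%E); last by rewrite ltey_eq ffin.
rewrite esum_mkcond; apply: le_esum => a _.
by case: ifPn => _; rewrite abse_EFin lee_fin //; case/andP: (u_dom a).
Qed.

Lemma l1_esum_fin_num f S : l1 f -> (\esum_(a in S) `|(f a)%:E|)%E \is a fin_num.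
Proof.
move=> fl1; rewrite (eq_esum (fun a _ => abse_EFin (f a))).
by apply: dominated_esum_fin_num fl1 _ => a; rewrite normr_ge0 lexx.
Qed.

Lemma fine_esum_trunc_gap f u S : l1 f -> (forall a, 0 <= u a <= `|f a|) ->
  0 <= fine (\esum_(a in [set: A]) (u a)%:E) - fine (\esum_(a in [set: A]) (trunc S u a)%:E)
    <= fine (\esum_(a in ~` S) `|(f a)%:E|)%E.
Proof.
move=> fl1 u_dom; have u0 a : 0 <= u a by case/andP: (u_dom a).
rewrite esum_trunc (esumID S) ?setTI; last by move=> a _; rewrite lee_fin.
rewrite fineD; [|exact: dominated_esum_fin_num u_dom..].
rewrite addrC addKr fine_ge0 /=; last by apply: esum_ge0 => a _; rewrite lee_fin.
apply: fine_le; [exact: dominated_esum_fin_num u_dom|exact: l1_esum_fin_num|].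
by apply: le_esum => a _; rewrite lee_fin; case/andP: (u_dom a).
Qed.

(* Truncation commutes with taking positive and negative parts, and each part
   loses between [0] and the tail of [|f|]; hence so does their difference. *)
Lemma lsum_trunc_dist f g S : l1 f -> (forall a, `|g a| <= `|f a|) ->
  (`|lsum g - lsum (trunc S g)|%:E <= \esum_(a in ~` S) `|(f a)%:E|)%E.
Proof.
move=> fl1 g_dom.
have pos_dom a : 0 <= Num.max (g a) 0 <= `|f a|.
  by rewrite le_max lexx orbT ge_max normr_ge0 andbT (le_trans (ler_norm _) (g_dom a)).
have neg_dom a : 0 <= Num.max (- g a) 0 <= `|f a|.
  by rewrite le_max lexx orbT ge_max normr_ge0 andbT (le_trans _ (g_dom a)) // -normrN ler_norm.
have trunc_pos : (fun a => (Num.max (trunc S g a) 0)%:E) =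
    (fun a => (trunc S (fun a => Num.max (g a) 0) a)%:E) :> (A -> \bar R).
  by apply/funext => a; rewrite /patch; case: ifP; rewrite ?maxxx.
have trunc_neg : (fun a => (Num.max (- trunc S g a) 0)%:E) =
    (fun a => (trunc S (fun a => Num.max (- g a) 0) a)%:E) :> (A -> \bar R).
  by apply/funext => a; rewrite /patch; case: ifP; rewrite ?oppr0 ?maxxx.
rewrite -(fineK (l1_esum_fin_num _ (~` S) fl1)) lee_fin /lsum trunc_pos trunc_neg.
move: (fine_esum_trunc_gap _ _ S fl1 pos_dom) (fine_esum_trunc_gap _ _ S fl1 neg_dom).
move: (fine _) (fine _) (fine _) (fine _) (fine _) => p pS n nS t.
by move=> /andP[? ?] /andP[? ?]; rewrite ler_norml; apply/andP; split; lra.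
Qed.

Lemma l1act_trunc_approx f e : l1 f -> 0 < e ->
  exists S0, finite_set S0 /\ forall S x, S0 `<=` S -> inball x ->
    `|l1act f x - l1act f (trunc S x)| < e.
Proof.
move=> fl1 e0; have [S0 [finS0 tail_lt]] := summable_tail_lt fl1 e0.
exists S0; split => // S x S0S x_ball.
rewrite /l1act; have -> : (fun a => f a * trunc S x a) = trunc S (fun a => f a * x a).
  by apply/funext => a; rewrite /patch; case: ifP; rewrite ?mulr0.
rewrite -lte_fin; apply: le_lt_trans (tail_lt S S0S).
apply: lsum_trunc_dist => // a.
by rewrite normrM ler_piMr.
Qed.

Lemma inball_trunc S x : inball x -> inball (trunc S x).
Proof. by move=> x_ball a; rewrite /patch; case: ifP; rewrite ?normr0. Qed.

Lemma finsupp_trunc x S : finite_set S -> finsupp (trunc S x).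
Proof.
move=> finS; apply: sub_finite_set finS => a /=.
by rewrite /patch; case: ifPn => [/set_mem|]; rewrite ?eqxx.
Qed.

Lemma gfun_finsupp (phi phi1 : (A -> R) -> R) phi0 x :
  (forall y, linf y -> finsupp y -> phi1 y = 0) ->
  (forall y, linf y -> phi y = l1act phi0 y + phi1 y) ->
  inball x -> finsupp x -> gfun phi x = gfun (l1act phi0) x.
Proof.
move=> phi1_fin phi_dec x_ball x_fin.
have abs_linf : linf (fun a => `|x a|) by exists 1 => a; rewrite normr_id.
rewrite /gfun phi_dec // phi1_fin ?addr0 //.
by apply: sub_finite_set x_fin => a /=; rewrite normr_eq0.
Qed.

End truncation.
Arguments l1act_trunc_approx {R A f e}.
Arguments gfun_finsupp {R A phi phi1 phi0 x}.

Theorem lemma4p9 (R : realType) (A : choiceType) (a0 : A)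
  (xi : (A -> R) -> R) (phi phi1 : (A -> R) -> R) (phi0 : A -> R) :
  wstar_cont_ball xi ->
  linf_dual phi ->
  l1 phi0 ->
  linf_dual phi1 ->
  (forall x, linf x -> finsupp x -> phi1 x = 0) ->
  (forall x, linf x -> phi x = l1act phi0 x + phi1 x) ->
  (forall x, inball x -> xi x <= gfun phi x) ->
  forall x, inball x -> xi x <= gfun (l1act phi0) x.
Proof.
move=> xi_cont _ phi0_l1 _ phi1_fin phi_dec xi_le x x_ball.
apply/ler_addgt0Pr => e e0; have e20 : 0 < e / 2 by lra.
have [n [F [d [d0 F_l1 xi_near]]]] := xi_cont x x_ball (e / 2) e20.
have [SF SF_approx] := choice (fun i => l1act_trunc_approx (F_l1 i) d0).
have [S0 [finS0 phi0_approx]] := l1act_trunc_approx phi0_l1 e20.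
pose S := S0 `|` \bigcup_(i in [set: 'I_n]) SF i.
have finS : finite_set S.
  rewrite finite_setU; split => //.
  by apply: bigcup_finite => [|i _]; [exact: finite_finset|exact: (SF_approx i).1].
pose xS := patch (fun=> 0) S x.
have xS_ball : inball xS by exact: inball_trunc.
have xS_fin : finsupp xS by exact: finsupp_trunc.
have xi_xS : `|xi xS - xi x| < e / 2.
  apply: xi_near => // i; rewrite distrC.
  by apply: (SF_approx i).2 => // a SFa; right; exists i.
have abs_xS : (fun a => `|xS a|) = patch (fun=> 0) S (fun a => `|x a|).
  by apply/funext => a; rewrite /xS /patch; case: ifP; rewrite ?normr0.
have phi0_xS : `|gfun (l1act phi0) x - gfun (l1act phi0) xS| < e / 2.
  rewrite /gfun abs_xS; apply: le_lt_trans (ler_dist_dist _ _) _.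
  by apply: phi0_approx => [a|a]; [left|rewrite normr_id].
have := xi_le xS xS_ball; rewrite (gfun_finsupp phi1_fin phi_dec xS_ball xS_fin).
by move: xi_xS phi0_xS; rewrite !ltr_norml; lra.
Qed.
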